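(* Let $p\in\mathbf{R}_+^n$, $K=(K_1,\dots,K_n)\in\mathbf{R}_{++}^n$, $w\in\mathbf{R}_{++}^n$ and $K_0>0$. Consider \[ p^{\inf}=\inf\Big\{\mathbf{E}_{\pi}(w^{T}x-K_0)_+ \;:\; \pi \mbox{ a probability measure on }\mathbf{R}_+^n,\ \mathbf{E}_{\pi}(x_i-K_i)_+=p_i,\ i=1,\dots,n\Big\}. \] Then \[ p^{\inf}=\inf_{\nu}\Big\{\sum_{i=1}^n\big(p_iw_i-\nu_i(K_0-w_iK_i)_+\big)_+ \;:\; \nu\in\mathbf{R}^n,\ \nu\ge 0,\ \textstyle\sum_i\nu_i=1\Big\}, \] and this value equals \[ \sum_{\{i:\,K_iw_i\ge K_0\}}p_iw_i+\max_{\{j:\,K_jw_j<K_0\}}\Big(\sum_{\{i:\,K_iw_i<K_0\}}p_iw_i\min\Big(1,\frac{K_0-K_jw_j}{K_0-K_iw_i}\Big)-K_0+w_jK_j\Big)_+ , \] where the maximum over an empty index set is taken to be $0$. Moreover, the infimum $p^{\inf}$ is attained or approached by a sequence of discrete probability measures satisfying the constraints.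
   Context: $(y)_+=\max(y,0)$. $\mathbf{R}_{++}^n$ denotes vectors with strictly positive components. *)

From HB Require Import structures.
From mathcomp Require Import all_boot all_order all_algebra.
From mathcomp Require Import all_classical all_reals all_analysis.
Set Implicit Arguments. Unset Strict Implicit. Unset Printing Implicit Defensive.
Import Order.TTheory GRing.Theory Num.Theory.
Local Open Scope classical_set_scope.
Local Open Scope ring_scope.

Definition pos_part (R : realType) (y : R) : R := Num.max y 0.

(* A probability measure on R_+^n is represented
   as the law of a random vector X = (X_1,...,X_n) (measurable, nonnegative
   coordinates) on an arbitrary probability space. *)
Definition feasible_values (R : realType) (n : nat) (p K w : 'I_n -> R) (K0 : R)
  : set (\bar R) :=
  [set v | exists (d : measure_display) (T : measurableType d)
             (P : probability T R) (X : 'I_n -> T -> R),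
      (forall i, measurable_fun setT (X i)) /\
      (forall i t, 0 <= X i t) /\
      (forall i, (\int[P]_t (pos_part (X i t - K i))%:E = (p i)%:E)%E) /\
      v = (\int[P]_t (pos_part (\sum_(i < n) w i * X i t - K0))%:E)%E].

Definition pinf (R : realType) (n : nat) (p K w : 'I_n -> R) (K0 : R) : \bar R :=
  ereal_inf (feasible_values p K w K0).

Definition simplex (R : realType) (n : nat) : set ('I_n -> R) :=
  [set nu | (forall i, 0 <= nu i) /\ \sum_(i < n) nu i = 1].

Definition dual_inf (R : realType) (n : nat) (p K w : 'I_n -> R) (K0 : R) : R :=
  inf [set \sum_(i < n) pos_part (p i * w i - nu i * pos_part (K0 - w i * K i))
      | nu in @simplex R n].

(* Explicit formula; the max over an empty index set is 0 (all terms are >= 0). *)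
Definition explicit_value (R : realType) (n : nat) (p K w : 'I_n -> R) (K0 : R) : R :=
  \sum_(i < n | K0 <= K i * w i) p i * w i +
  \big[Num.max/0]_(j < n | K j * w j < K0)
     pos_part (\sum_(i < n | K i * w i < K0)
                 p i * w i * Num.min 1 ((K0 - K j * w j) / (K0 - K i * w i))
               - K0 + w j * K j).

(* Finitely supported (discrete) probability measures on R^n:
   sum_k dm_wt k * delta_{dm_pt k}. *)
Record dmeasure (R : realType) (n : nat) := DMeasure {
  dm_size : nat;
  dm_wt : 'I_dm_size -> R;
  dm_pt : 'I_dm_size -> 'I_n -> R }.

Arguments dm_size {R n}.
Arguments dm_wt {R n}.
Arguments dm_pt {R n}.

Definition dm_feasible (R : realType) (n : nat) (p K : 'I_n -> R) (m : dmeasure R n) : Prop :=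
  (forall k, 0 <= dm_wt m k) /\ \sum_(k < dm_size m) dm_wt m k = 1 /\
  (forall k i, 0 <= dm_pt m k i) /\
  (forall i, \sum_(k < dm_size m) dm_wt m k * pos_part (dm_pt m k i - K i) = p i).

Definition dm_value (R : realType) (n : nat) (w : 'I_n -> R) (K0 : R) (m : dmeasure R n) : R :=
  \sum_(k < dm_size m) dm_wt m k * pos_part (\sum_(i < n) w i * dm_pt m k i - K0).

From mathcomp Require Import all_boot all_order all_algebra.
From mathcomp Require Import all_classical all_reals all_analysis.
From mathcomp Require Import measurable_realfun ring lra.
Set Implicit Arguments. Unset Strict Implicit. Unset Printing Implicit Defensive.
Import Order.TTheory GRing.Theory Num.Theory.
Import numFieldTopology.Exports numFieldNormedType.Exports.
Local Open Scope classical_set_scope.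
Local Open Scope ring_scope.

(** Weak duality comes from static hedges: holding [w i * mu i] calls on asset
    [i] (with [0 <= mu i <= 1]) and borrowing [t >= mu i * (K0 - w i * K i)] is
    dominated pointwise by the basket call, since only in-the-money calls pay and
    all of them are bounded by the one of largest weight.  Taking expectations,
    every feasible value and every dual objective is at least
    [sum_i w i * mu i * p i - t], and the best such bound is the explicit value.
    Conversely, the dual point that spends its unit budget on the largest gaps
    [K0 - w i * K i] first attains the explicit value; it is the value of the
    law putting mass [nu i] at [K i + p i / nu i] on the i-th axis and the rest
    at the origin, and perturbing [nu] into the interior of the simplex yields
    feasible discrete measures whose values converge to it. *)

Section PosPart.
Variable R : realType.
Implicit Types m y z : R.

Lemma pos_part_ge0 y : 0 <= pos_part y.
Proof. by rewrite /pos_part le_max lexx orbT. Qed.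

Lemma ler_pos_part y : y <= pos_part y.
Proof. by rewrite /pos_part le_max lexx. Qed.

Lemma ger0_pos_part y : 0 <= y -> pos_part y = y.
Proof. by move=> y_ge0; rewrite /pos_part max_l. Qed.

Lemma ler0_pos_part y : y <= 0 -> pos_part y = 0.
Proof. by move=> y_le0; rewrite /pos_part max_r. Qed.

Lemma ge_pos_part z y : (pos_part y <= z) = (y <= z) && (0 <= z).
Proof. by rewrite /pos_part ge_max. Qed.

Lemma le_pos_part : {homo @pos_part R : y z / y <= z}.
Proof.
by move=> y z yz; rewrite ge_pos_part pos_part_ge0 (le_trans yz (ler_pos_part z)).
Qed.

Lemma pos_partM m y : 0 <= m -> m * pos_part y = pos_part (m * y).
Proof. by move=> m_ge0; rewrite /pos_part maxr_pMr // mulr0. Qed.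

Lemma mulr_le_pos_part m y : 0 <= m <= 1 -> m * y <= pos_part y.
Proof.
move=> /andP[m_ge0 m_le1]; apply: le_trans (ler_wpM2l m_ge0 (ler_pos_part y)) _.
by rewrite ler_piMl // pos_part_ge0.
Qed.

Lemma pos_part_continuous : continuous (@pos_part R).
Proof.
move=> y; apply: (@continuous_max _ _ id (cst 0)); first exact: cvg_id.
exact: cvg_cst.
Qed.

Lemma measurable_pos_part (d : measure_display) (T : measurableType d) (h : T -> R) :
  measurable_fun setT h -> measurable_fun setT (fun s => pos_part (h s)).
Proof.
by move=> mh; apply: (@measurable_maxr _ _ _ _ h (cst 0)) => //; exact: measurable_cst.
Qed.

End PosPart.

Lemma min1_ratio (R : realFieldType) (s c : R) : 0 <= s -> 0 < c ->
  0 <= Num.min 1 (s / c) <= 1 /\ Num.min 1 (s / c) * c <= s.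
Proof.
move=> s_ge0 c_gt0; split; last by rewrite -ler_pdivlMr // ge_min lexx orbT.
by rewrite ge_min lexx le_min ler01 divr_ge0 // ltW.
Qed.

Lemma ereal_le_cvg (R : realType) (x : \bar R) (u : R^nat) (l : R) :
  u @ \oo --> l -> (forall k, (x <= (u k)%:E)%E) -> (x <= l%:E)%E.
Proof.
move=> u_l x_le; have uE_l : (fun k => (u k)%:E) @ \oo --> l%:E.
  by apply: cvg_EFin => //; exact: nearW.
by rewrite -(cvg_lim _ uE_l) //; apply: lime_ge; [exact: cvgP uE_l | exact: nearW].
Qed.

Section QuantileWeights.
Variables (R : realType) (I : finType) (L : pred I) (a c : I -> R).
Hypotheses (a_ge0 : forall i, 0 <= a i) (c_gt0 : forall i, L i -> 0 < c i).

Lemma weighted_quantile (r : I -> R) : (forall i, L i -> 0 <= r i) ->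
  1 < \sum_(i | L i) r i ->
  exists2 j, L j & \sum_(i | L i && (c j < c i)) r i <= 1 <= \sum_(i | L i && (c j <= c i)) r i.
Proof.
move=> r_ge0 sum_gt1.
have sum_mono (P Q : pred I) : (forall i, L i -> P i -> Q i) ->
    \sum_(i | L i && P i) r i <= \sum_(i | L i && Q i) r i.
  move=> PQ; rewrite [leRHS]big_mkcond [leLHS]big_mkcond; apply: ler_sum => i _.
  case: (boolP (L i)) => //= Li; case: (boolP (P i)) => Pi /=.
    by rewrite (PQ i Li Pi).
  by case: ifP => // _; exact: r_ge0.
have witness (P : pred I) : 1 < \sum_(i | P i) r i -> exists i, P i.
  case: (pickP P) => [i Pi|P0]; first by exists i.
  by rewrite big_pred0 // ltr10.
have [i0 Li0] := witness _ sum_gt1.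
pose J i := L i && (1 <= \sum_(k | L k && (c i <= c k)) r k).
case: (@arg_minP _ _ _ i0 L c Li0) => j0 Lj0 j0_min.
have J_j0 : J j0.
  rewrite /J Lj0 ltW // (lt_le_trans sum_gt1) //.
  rewrite (eq_bigl (fun i => L i && xpredT i)) => [|i]; last by rewrite andbT.
  by apply: sum_mono => i Li _; exact: j0_min.
(* [j] is the largest level whose upper tail still has mass at least 1. *)
case: (arg_maxP c J_j0) => j /andP[Lj j_quantile] j_max.
exists j => //; rewrite j_quantile andbT leNgt; apply/negP => sum_above_gt1.
have [k /andP[Lk jk]] := witness _ sum_above_gt1.
case: (@arg_minP _ _ _ k (fun i => L i && (c j < c i)) c (introT andP (conj Lk jk))).
move=> m /andP[Lm jm] m_min.
have /j_max : J m.
  rewrite /J Lm ltW // (lt_le_trans sum_above_gt1) //.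
  by apply: sum_mono => i Li ji; apply: m_min; rewrite Li.
by rewrite /= leNgt jm.
Qed.

(* The budget is spent on the largest [c i] first, saturating them
   ([a i - nu i * c i = 0]), with a fraction [th] at the threshold level [c j]. *)
Definition quantile_weights (j : I) (th : R) (i : I) : R :=
  if L i then
    if c j < c i then a i / c i else if c i == c j then th * (a i / c i) else 0
  else 0.

Lemma quantile_weights_ge0 j th i : 0 <= th -> 0 <= quantile_weights j th i.
Proof.
move=> th_ge0; rewrite /quantile_weights; case: ifP => // Li.
have ac_ge0 : 0 <= a i / c i := divr_ge0 (a_ge0 i) (ltW (c_gt0 Li)).
by case: ifP => // _; case: ifP => // _; rewrite mulr_ge0.
Qed.

Lemma quantile_weights_out j th i : ~~ L i -> quantile_weights j th i = 0.
Proof. by rewrite /quantile_weights => /negbTE ->. Qed.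

Lemma quantile_weight_cost j th i : L j -> L i -> 0 <= th <= 1 ->
  pos_part (a i - quantile_weights j th i * c i) <=
  a i * Num.min 1 (c j / c i) - c j * quantile_weights j th i.
Proof.
move=> Lj Li /andP[th_ge0 th_le1]; rewrite /quantile_weights Li.
have ci_gt0 := c_gt0 Li; have cj_gt0 := c_gt0 Lj.
have ci_neq0 : c i != 0 by rewrite gt_eqF.
case: (ltgtP (c j) (c i)) => [ji|ij|->].
- rewrite divfK // subrr ler0_pos_part // min_r; last by rewrite ler_pdivrMr // mul1r ltW.
  by rewrite mulrCA subrr.
- rewrite mul0r subr0 mulr0 subr0 min_l; last by rewrite ler_pdivlMr // mul1r ltW.
  by rewrite mulr1 ger0_pos_part.
- rewrite mulfV // (@min_l _ _ 1 1) // mulr1 -mulrA divfK // mulrCA (mulrCA (c i)).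
  rewrite mulfV // mulr1.
  by rewrite ger0_pos_part // subr_ge0 ler_piMl.
Qed.

Lemma quantile_weights_sum j th : \sum_i quantile_weights j th i =
  \sum_(i | L i && (c j < c i)) a i / c i + th * \sum_(i | L i && (c i == c j)) a i / c i.
Proof.
rewrite [in RHS]big_mkcond [X in _ + _ * X]big_mkcond mulr_sumr -big_split /=.
apply: eq_bigr => i _; rewrite /quantile_weights; case: (L i) => /=; last by rewrite mulr0 addr0.
by case: ltgtP => //=; rewrite ?mulr0 ?addr0 ?add0r.
Qed.

Lemma quantile_weights_sum1 j :
  \sum_(i | L i && (c j < c i)) a i / c i <= 1 <= \sum_(i | L i && (c j <= c i)) a i / c i ->
  exists2 th, 0 <= th <= 1 & \sum_i quantile_weights j th i = 1.
Proof.
set U := \sum_(i | _) _; set W := \sum_(i | L i && (c i == c j)) a i / c i.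
have -> : \sum_(i | L i && (c j <= c i)) a i / c i = U + W.
  rewrite (bigID (fun i => c j < c i)) /=; congr (_ + _); apply: eq_bigl => i.
    by rewrite -andbA; case: ltgtP.
  by rewrite -andbA; case: ltgtP.
move=> /andP[U_le1 UW_ge1].
have W_ge0 : 0 <= W.
  by apply: sumr_ge0 => i /andP[Li _]; exact: divr_ge0 (a_ge0 i) (ltW (c_gt0 Li)).
case: (eqVneq W 0) => [W0|W_neq0].
  exists 0; first by rewrite lexx ler01.
  by rewrite quantile_weights_sum mul0r addr0 -/U; move: UW_ge1; rewrite W0; lra.
exists ((1 - U) / W); last by rewrite quantile_weights_sum -/U -/W divfK // addrC subrK.
have W_gt0 : 0 < W by rewrite lt_neqAle eq_sym W_neq0.
by rewrite divr_ge0 ?subr_ge0 // ler_pdivrMr // mul1r; lra.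
Qed.

Lemma optimal_weights : exists nu : I -> R,
  [/\ forall i, 0 <= nu i, forall i, ~~ L i -> nu i = 0, \sum_i nu i <= 1 &
      \sum_(i | L i) pos_part (a i - nu i * c i) <=
      \big[Num.max/0]_(j | L j) pos_part (\sum_(i | L i) a i * Num.min 1 (c j / c i) - c j)].
Proof.
have ac_ge0 i : L i -> 0 <= a i / c i.
  by move=> Li; exact: divr_ge0 (a_ge0 i) (ltW (c_gt0 Li)).
have [small|large] := lerP (\sum_(i | L i) a i / c i) 1.
  exists (fun i => if L i then a i / c i else 0); split.
  - by move=> i; case: ifPn => [/ac_ge0|].
  - by move=> i /negbTE ->.
  - by rewrite -big_mkcond.
  rewrite big1 => [|i Li]; first exact: bigmax_ge_id.
  by rewrite Li divfK ?subrr ?ler0_pos_part // gt_eqF // c_gt0.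
have [j Lj quantile_j] := weighted_quantile ac_ge0 large.
have [th th_01 sum1] := quantile_weights_sum1 quantile_j.
exists (quantile_weights j th); split.
- by move=> i; apply: quantile_weights_ge0 => //; case/andP: th_01.
- by move=> i; exact: quantile_weights_out.
- by rewrite sum1.
apply: le_trans (le_bigmax_cond _ _ Lj); apply: le_trans (ler_pos_part _).
apply: le_trans (ler_sum _ (fun i Li => quantile_weight_cost Lj Li th_01)) _.
rewrite sumrB -mulr_sumr.
have -> : \sum_(i | L i) quantile_weights j th i = 1.
  rewrite -sum1 [RHS](bigID L) /= [X in _ + X]big1 ?addr0 // => i.
  exact: quantile_weights_out.
by rewrite mulr1.
Qed.

End QuantileWeights.

Section BasketBounds.
Variables (R : realType) (n : nat) (p K w : 'I_n -> R) (K0 : R).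
Hypotheses (p_ge0 : forall i, 0 <= p i) (K_gt0 : forall i, 0 < K i)
  (w_gt0 : forall i, 0 < w i) (K0_gt0 : 0 < K0).

Local Notation gap i := (K0 - K i * w i).

(* [w i * mu i] calls on asset [i] and a debt [t]: by [hedge_payoff_le] this
   portfolio is dominated by the basket call. *)
Definition admissible_hedge (mu : 'I_n -> R) (t : R) : Prop :=
  0 <= t /\ forall i, 0 <= mu i <= 1 /\ mu i * gap i <= t.

Definition hedge_value (mu : 'I_n -> R) : R := \sum_(i < n) w i * mu i * p i.

Lemma explicit_value_le (v : R) :
  (forall mu t, admissible_hedge mu t -> hedge_value mu <= v + t) ->
  explicit_value p K w K0 <= v.
Proof.
move=> hedge_le.
pose sumS := \sum_(i < n | K0 <= K i * w i) p i * w i.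
have hedge_valueE mu : (forall i, K0 <= K i * w i -> mu i = 1) ->
    hedge_value mu = sumS + \sum_(i < n | K i * w i < K0) p i * w i * mu i.
  move=> mu1; rewrite /hedge_value (bigID (fun i => K0 <= K i * w i)) /=.
  congr (_ + _); first by apply: eq_bigr => i /mu1 ->; rewrite mulr1 mulrC.
  by apply: eq_big => [i|i _]; rewrite ?ltNge // mulrAC [w i * _]mulrC.
pose mu0 i : R := if K0 <= K i * w i then 1 else 0.
have sumS_le : sumS <= v.
  have := hedge_le mu0 0; rewrite addr0 hedge_valueE => [|i]; last by rewrite /mu0 => ->.
  rewrite big1 ?addr0 => [|i]; last by rewrite /mu0 ltNge => /negbTE ->; rewrite mulr0.
  apply; split=> // i; rewrite /mu0; case: ifP => Si; rewrite ?ler01 ?lexx ?mul0r //.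
  by rewrite mul1r subr_le0.
rewrite /explicit_value -lerBrDl; apply: bigmax_le => [|j Lj]; first by rewrite subr_ge0.
rewrite ge_pos_part subr_ge0 sumS_le andbT.
pose mu i : R := if K0 <= K i * w i then 1 else Num.min 1 (gap j / gap i).
have gapj_gt0 : 0 < gap j by rewrite subr_gt0.
suff /hedge_le : admissible_hedge mu (gap j).
  rewrite hedge_valueE => [|i]; last by rewrite /mu => ->.
  rewrite (eq_bigr (fun i => p i * w i * Num.min 1 (gap j / gap i))) => [|i Li].
    by rewrite (mulrC (w j)) -/sumS; lra.
  by rewrite /mu leNgt Li.
split=> [|i]; first exact: ltW.
rewrite /mu; case: (lerP K0 (K i * w i)) => [Si|Li]; first by rewrite ler01 lexx mul1r; lra.
by apply: min1_ratio; rewrite ?subr_gt0 ?ltW.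
Qed.

Definition dual_obj (nu : 'I_n -> R) : R :=
  \sum_(i < n) pos_part (p i * w i - nu i * pos_part (K0 - w i * K i)).

Lemma hedge_value_le_dual_obj nu mu t : simplex nu -> admissible_hedge mu t ->
  hedge_value mu <= dual_obj nu + t.
Proof.
move=> [nu_ge0 nu_sum1] [t_ge0 mu_adm].
suff term i : w i * mu i * p i <=
    pos_part (p i * w i - nu i * pos_part (K0 - w i * K i)) + nu i * t.
  apply: le_trans (ler_sum _ (fun i _ => term i)) _.
  by rewrite big_split /= -mulr_suml nu_sum1 mul1r.
have [mu_01 mu_gap] := mu_adm i; rewrite (mulrC (w i) (K i)).
have mu_pos_gap : mu i * pos_part (gap i) <= t.
  by case/andP: mu_01 => mu_ge0 _; rewrite pos_partM // ge_pos_part mu_gap t_ge0.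
have := ler_wpM2l (nu_ge0 i) mu_pos_gap.
have := mulr_le_pos_part (p i * w i - nu i * pos_part (gap i)) mu_01.
lra.
Qed.

Lemma explicit_value_le_dual_obj nu : simplex nu -> explicit_value p K w K0 <= dual_obj nu.
Proof. by move=> nu_simplex; apply: explicit_value_le => mu t; exact: hedge_value_le_dual_obj. Qed.

Lemma sum_call_le (x : 'I_n -> R) (k : 'I_n) : (forall i, 0 <= x i) -> K k <= x k ->
  \sum_(i < n) w i * pos_part (x i - K i) <= \sum_(i < n) w i * x i - w k * K k.
Proof.
move=> x_ge0 itm_k; rewrite (bigD1 k) //= [X in _ <= X - _](bigD1 k) //=.
rewrite ger0_pos_part ?subr_ge0 // mulrBr addrAC lerD2r lerD2l.
apply: ler_sum => i _; rewrite ler_pM2l // ge_pos_part x_ge0 andbT.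
by rewrite lerBlDr lerDl ltW.
Qed.

Lemma hedge_payoff_le (x : 'I_n -> R) mu t : (forall i, 0 <= x i) -> admissible_hedge mu t ->
  \sum_(i < n) w i * mu i * pos_part (x i - K i) <=
  pos_part (\sum_(i < n) w i * x i - K0) + t.
Proof.
move=> x_ge0 [t_ge0 mu_adm].
case: (pickP (fun i => K i < x i)) => [i0 itm_i0 | otm]; last first.
  rewrite big1 => [|i _]; first by rewrite addr_ge0 ?pos_part_ge0.
  by rewrite ler0_pos_part ?mulr0 // subr_le0 leNgt otm.
(* Only in-the-money calls pay; weight them all by the largest such [mu k]. *)
case: (@arg_maxP _ _ _ i0 (fun i => K i < x i) mu itm_i0) => k itm_k mu_max.
have [/andP[mu_k_ge0 mu_k_le1] mu_gap_k] := mu_adm k.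
have : \sum_(i < n) w i * mu i * pos_part (x i - K i) <=
       mu k * \sum_(i < n) w i * pos_part (x i - K i).
  rewrite mulr_sumr; apply: ler_sum => i _.
  case: (ltP (K i) (x i)) => [itm_i|otm_i]; last by rewrite ler0_pos_part ?subr_le0 ?mulr0.
  rewrite -mulrA mulrCA; apply: ler_wpM2r; last exact: mu_max.
  by rewrite mulr_ge0 ?pos_part_ge0 ?ltW.
have := ler_wpM2l mu_k_ge0 (sum_call_le x_ge0 (ltW itm_k)).
have := mulr_le_pos_part (\sum_(i < n) w i * x i - K0) (introT andP (conj mu_k_ge0 mu_k_le1)).
lra.
Qed.

Lemma hedge_value_le_expected_payoff (d : measure_display) (T : measurableType d)
    (P : probability T R) (X : 'I_n -> T -> R) mu t :
  (forall i, measurable_fun setT (X i)) -> (forall i s, 0 <= X i s) ->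
  (forall i, (\int[P]_s (pos_part (X i s - K i))%:E = (p i)%:E)%E) ->
  admissible_hedge mu t ->
  ((hedge_value mu)%:E <=
   \int[P]_s (pos_part (\sum_(i < n) w i * X i s - K0))%:E + t%:E)%E.
Proof.
move=> mX X_ge0 X_calls [t_ge0 mu_adm].
have weight_ge0 i : 0 <= w i * mu i.
  by have [/andP[mu_ge0 _] _] := mu_adm i; exact: mulr_ge0 (ltW (w_gt0 i)) mu_ge0.
have m_call i : measurable_fun setT (fun s => pos_part (X i s - K i)).
  by apply: measurable_pos_part; apply: measurable_funB => //; exact: measurable_cst.
have m_hedge i : measurable_fun setT (fun s => w i * mu i * pos_part (X i s - K i)).
  by apply: measurable_funM => //; exact: measurable_cst.
have m_basket : measurable_fun setT (fun s => pos_part (\sum_(i < n) w i * X i s - K0)).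
  apply: measurable_pos_part; apply: measurable_funB; last exact: measurable_cst.
  by apply: measurable_sum => i; apply: measurable_funM => //; exact: measurable_cst.
have -> : ((hedge_value mu)%:E =
    \int[P]_s (\sum_(i < n) (w i * mu i * pos_part (X i s - K i))%:E))%E.
  rewrite ge0_integral_sum // => [|i|i s _]; last 2 first.
  - exact/measurable_EFinP.
  - by rewrite lee_fin mulr_ge0 ?pos_part_ge0.
  rewrite /hedge_value -sumEFin; apply: eq_bigr => i _.
  rewrite EFinM -X_calls -ge0_integralZl // => [|s _|]; first exact/measurable_EFinP.
  - by rewrite lee_fin pos_part_ge0.
  - by rewrite lee_fin.
have -> : (t%:E = \int[P]_s (cst t%:E s))%E.
  by rewrite integral_cst //= probability_setT mule1.
rewrite -ge0_integralD // => [|s _|]; last 2 first.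
- by rewrite lee_fin pos_part_ge0.
- exact/measurable_EFinP.
apply: ge0_le_integral => // [s _|||s _].
- by rewrite sumEFin lee_fin sumr_ge0 // => i _; rewrite mulr_ge0 ?pos_part_ge0.
- by apply: emeasurable_sum => i; exact/measurable_EFinP.
- by apply: emeasurable_funD => //; exact/measurable_EFinP.
- by rewrite sumEFin -EFinD lee_fin hedge_payoff_le.
Qed.

Lemma explicit_value_le_feasible v : feasible_values p K w K0 v ->
  ((explicit_value p K w K0)%:E <= v)%E.
Proof.
move=> [d [T [P [X [mX [X_ge0 [X_calls ->]]]]]]].
set V := (\int[P]_s _)%E.
have V_ge0 : (0 <= V)%E by apply: integral_ge0 => s _; rewrite lee_fin pos_part_ge0.
have [->|V_fin] := eqVneq V +oo%E; first by rewrite leey.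
have VE : V = (fine V)%:E by rewrite fineK // ge0_fin_numE // ltey.
rewrite VE lee_fin; apply: explicit_value_le => mu t adm.
by rewrite -lee_fin EFinD -VE; exact: hedge_value_le_expected_payoff.
Qed.

Definition axis_value (q : 'I_n -> R) : R := \sum_(i < n) pos_part (p i * w i - q i * gap i).

Lemma axis_value_split q : (forall i, K0 <= K i * w i -> q i = 0) ->
  axis_value q = \sum_(i < n | K0 <= K i * w i) p i * w i +
                 \sum_(i < n | K i * w i < K0) pos_part (p i * w i - q i * gap i).
Proof.
move=> q_out; rewrite /axis_value (bigID (fun i => K0 <= K i * w i)) /=; congr (_ + _).
  apply: eq_bigr => i /q_out ->; rewrite mul0r subr0 ger0_pos_part //.
  exact: mulr_ge0 (p_ge0 i) (ltW (w_gt0 i)).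
by apply: eq_bigl => i; rewrite ltNge.
Qed.

Lemma optimal_axis_weights : exists nu : 'I_n -> R,
  [/\ forall i, 0 <= nu i, forall i, K0 <= K i * w i -> nu i = 0, \sum_(i < n) nu i <= 1 &
      axis_value nu <= explicit_value p K w K0].
Proof.
have pw_ge0 i : 0 <= p i * w i := mulr_ge0 (p_ge0 i) (ltW (w_gt0 i)).
have gap_gt0 i : K i * w i < K0 -> 0 < gap i by rewrite subr_gt0.
have [nu [nu_ge0 nu_out nu_le1 nu_cost]] := optimal_weights pw_ge0 gap_gt0.
have nu_out' i : K0 <= K i * w i -> nu i = 0 by rewrite leNgt => /nu_out.
exists nu; split => //; rewrite axis_value_split // /explicit_value lerD2l.
apply: le_trans nu_cost (le_bigmax2 _ _) => j _; apply: le_pos_part; lra.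
Qed.

Lemma simplex_pad (nu : 'I_n -> R) : (0 < n)%N -> (forall i, 0 <= nu i) ->
  \sum_(i < n) nu i <= 1 -> exists2 nu', simplex nu' & forall i, nu i <= nu' i.
Proof.
move=> n_gt0 nu_ge0 nu_le1; pose d := (1 - \sum_(i < n) nu i) / n%:R.
have d_ge0 : 0 <= d by rewrite divr_ge0 ?subr_ge0.
exists (fun i => nu i + d) => [|i]; last by rewrite lerDl.
split=> [i|]; first by rewrite addr_ge0.
by rewrite big_split /= sumr_const card_ord -mulr_natr divfK ?pnatr_eq0 -?lt0n // addrC subrK.
Qed.

Lemma dual_obj_le_axis_value nu nu' : (forall i, K0 <= K i * w i -> nu i = 0) ->
  (forall i, nu i <= nu' i) -> dual_obj nu' <= axis_value nu.
Proof.
move=> nu_out le_nu'; apply: ler_sum => i _; rewrite (mulrC (w i)).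
have [Si|Li] := lerP K0 (K i * w i).
  by rewrite nu_out // [pos_part (gap i)]ler0_pos_part ?subr_le0 // mulr0 mul0r.
rewrite [pos_part (gap i)]ger0_pos_part; last by rewrite subr_ge0 ltW.
apply: le_pos_part.
by rewrite lerD2l lerN2 ler_wpM2r // subr_ge0 ltW.
Qed.

Lemma dual_inf_eq : dual_inf p K w K0 = explicit_value p K w K0.
Proof.
have [n0|n_gt0] := posnP n.
  have no_index (i : 'I_n) : False by case: i => i; rewrite n0.
  have simplex0 : @simplex R n = set0.
    apply/seteqP; split=> // nu [_]; rewrite big_pred0 => [/eqP|i]; last by case: (no_index i).
    by rewrite eq_sym oner_eq0.
  by rewrite /dual_inf simplex0 image_set0 inf0 /explicit_value !big_pred0 ?addr0.
have [nu [nu_ge0 nu_out nu_le1 nu_le]] := optimal_axis_weights.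
have [nu' nu'_simplex le_nu'] := simplex_pad n_gt0 nu_ge0 nu_le1.
have dual_obj_ge0 mu : 0 <= dual_obj mu.
  by apply: sumr_ge0 => i _; exact: pos_part_ge0.
apply/le_anti/andP; split.
  apply: le_trans (le_trans (dual_obj_le_axis_value nu_out le_nu') nu_le).
  rewrite /dual_inf; apply: ge_inf; last by exists nu'.
  by exists 0 => _ [mu _ <-]; exact: dual_obj_ge0.
apply: lb_le_inf; first by exists (dual_obj nu'), nu'.
by move=> _ [mu mu_simplex <-]; exact: explicit_value_le_dual_obj.
Qed.


(* Atom [ord0] is the origin and atom [lift ord0 i] lies on the i-th axis,
   where only the call on asset [i] pays. *)
Definition axis_dmeasure (q : 'I_n -> R) : dmeasure R n :=
  @DMeasure R n n.+1
    (fun k => if unlift ord0 k is Some i then q i else 1 - \sum_(i < n) q i)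
    (fun k j => if unlift ord0 k is Some i then
                  if i == j then K j + p j / q j else 0
                else 0).

Lemma axis_dmeasure_feasible q : (forall i, 0 < q i) -> \sum_(i < n) q i <= 1 ->
  dm_feasible p K (axis_dmeasure q).
Proof.
move=> q_gt0 q_le1; split; [|split; [|split]] => /=.
- by move=> k; case: (unlift ord0 k) => [i|]; [exact: ltW | rewrite subr_ge0].
- rewrite big_ord_recl unlift_none [X in _ + X](eq_bigr q) => [|i _]; last by rewrite liftK.
  by rewrite subrK.
- move=> k j; case: (unlift ord0 k) => [i|] //; case: eqP => // _.
  exact: addr_ge0 (ltW (K_gt0 j)) (divr_ge0 (p_ge0 j) (ltW (q_gt0 j))).
move=> j; rewrite big_ord_recl unlift_none sub0r ler0_pos_part ?oppr_le0 ?ltW // mulr0 add0r.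
rewrite (bigD1 j) //= liftK eqxx big1 => [|i /negbTE ij]; last first.
  by rewrite liftK ij sub0r ler0_pos_part ?mulr0 // oppr_le0 ltW.
rewrite addr0 addrC addKr ger0_pos_part; last exact: divr_ge0 (p_ge0 j) (ltW (q_gt0 j)).
by rewrite mulrCA mulfV ?mulr1 // gt_eqF.
Qed.

Lemma axis_dmeasure_value q : (forall i, 0 < q i) ->
  dm_value w K0 (axis_dmeasure q) = axis_value q.
Proof.
move=> q_gt0; rewrite /dm_value big_ord_recl /= unlift_none.
rewrite [\sum_(j < n) _ * 0]big1 => [|j _]; last exact: mulr0.
rewrite sub0r ler0_pos_part ?oppr_le0 ?ltW // mulr0 add0r; apply: eq_bigr => i _.
rewrite liftK (bigD1 i) //= eqxx big1 => [|j /negbTE ji]; last by rewrite eq_sym ji mulr0.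
rewrite addr0 pos_partM ?ltW //; congr pos_part.
by field; rewrite gt_eqF.
Qed.

(* [axis_dmeasure] needs positive weights: move towards the uniform weights. *)
Definition interior_approx (nu : 'I_n -> R) (k : nat) (i : 'I_n) : R :=
  (1 - k.+1%:R^-1) * nu i + k.+1%:R^-1 / n%:R.

Lemma interior_approx_gt0 nu k i : (forall i, 0 <= nu i) -> 0 < interior_approx nu k i.
Proof.
move=> nu_ge0; have n_gt0 : (0 < n)%N by apply: leq_ltn_trans (ltn_ord i).
apply: ltr_wpDl; last by rewrite divr_gt0 ?ltr0n.
by rewrite mulr_ge0 // subr_ge0 invf_le1 ?ler1n ?ltr0n.
Qed.

Lemma interior_approx_sum nu k : \sum_(i < n) nu i <= 1 ->
  \sum_(i < n) interior_approx nu k i <= 1.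
Proof.
move=> nu_le1; pose h : R := k.+1%:R^-1.
have h_01 : 0 < h <= 1 by rewrite invr_gt0 ltr0n invf_le1 ?ler1n ?ltr0n.
rewrite big_split /= -mulr_sumr sumr_const card_ord.
have uniform_le : (h / n%:R) *+ n <= h.
  case: (posnP n) => [->|n_gt0]; first by rewrite mulr0n ltW //; case/andP: h_01.
  by rewrite -mulr_natr divfK ?pnatr_eq0 -?lt0n.
have : (1 - h) * \sum_(i < n) nu i <= 1 - h by rewrite ler_piMr // subr_ge0; case/andP: h_01.
rewrite -/h; lra.
Qed.

Lemma interior_approx_cvg nu i : interior_approx nu ^~ i @ \oo --> nu i.
Proof.
have -> : nu i = (1 - 0) * nu i + 0 / n%:R by rewrite subr0 mul1r mul0r addr0.
apply: cvgD; apply: cvgMr_tmp; last exact: cvg_harmonic.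
by apply: cvgB; [exact: cvg_cst | exact: cvg_harmonic].
Qed.

Lemma axis_value_cvg (u : nat -> 'I_n -> R) nu : (forall i, u ^~ i @ \oo --> nu i) ->
  axis_value (u k) @[k --> \oo] --> axis_value nu.
Proof.
move=> u_nu; apply: cvg_big => [|i _]; first exact: add_continuous.
apply: continuous_cvg; first exact: pos_part_continuous.
apply: cvgB; first exact: cvg_cst.
by apply: cvgMr_tmp; exact: u_nu.
Qed.

Lemma axis_dmeasure_approx nu : (forall i, 0 <= nu i) -> \sum_(i < n) nu i <= 1 ->
  exists ms : nat -> dmeasure R n,
    (forall k, dm_feasible p K (ms k)) /\ dm_value w K0 (ms k) @[k --> \oo] --> axis_value nu.
Proof.
move=> nu_ge0 nu_le1; exists (fun k => axis_dmeasure (interior_approx nu k)); split.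
  move=> k; apply: axis_dmeasure_feasible; last exact: interior_approx_sum.
  by move=> i; exact: interior_approx_gt0.
under eq_fun => k do rewrite (axis_dmeasure_value (interior_approx_gt0 k ^~ nu_ge0)).
exact/axis_value_cvg/interior_approx_cvg.
Qed.

End BasketBounds.

Section DiscreteLaw.
Variables (R : realType) (n : nat) (m : dmeasure R n).

(* The law is realised on [nat]; indices beyond [dm_size m] carry no mass. *)
Definition dm_wt_nat (k : nat) : R := if insub k is Some i then dm_wt m i else 0.

Definition dm_pt_nat (k : nat) : 'I_n -> R :=
  if insub k is Some i then dm_pt m i else fun=> 0.

Lemma dm_feasible_value (p K w : 'I_n -> R) (K0 : R) :
  dm_feasible p K m -> feasible_values p K w K0 (dm_value w K0 m)%:E.
Proof.
move=> [wt_ge0 [wt_sum1 [pt_ge0 pt_calls]]].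
have wt_nat_ge0 k : 0 <= dm_wt_nat k by rewrite /dm_wt_nat; case: insubP.
pose mu := msum (fun k => mscale (NngNum (wt_nat_ge0 k)) \d_k) (dm_size m).
have mu_setT : mu [set: nat] = 1%E.
  rewrite /mu /msum /= /mscale /=; under eq_bigr do rewrite diracT mule1.
  by rewrite sumEFin -wt_sum1; congr (_%:E); apply: eq_bigr => k _; rewrite /dm_wt_nat valK.
pose P := mnormalize mu (\d_0%N : probability nat R).
have P_mu : P = mu :> (set nat -> \bar R).
  by apply/funext => U; rewrite /P /mnormalize /= -/mu mu_setT onee_eq0 /= invr1 mule1.
have P_integral (f : nat -> \bar R) : (forall k, 0 <= f k)%E ->
    (integral P setT f = \sum_(k < dm_size m) (dm_wt m k)%:E * f k)%E.
  move=> f_ge0; rewrite P_mu ge0_integral_measure_sum //; apply: eq_bigr => k _.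
  by rewrite ge0_integral_mscale // integral_dirac // diracT mul1e /= /dm_wt_nat valK.
exists default_measure_display, nat, P, (fun i k => dm_pt_nat k i); split=> //.
split=> [i k|]; first by rewrite /dm_pt_nat; case: insubP.
split=> [i|]; rewrite P_integral /= => [|k]; try by rewrite lee_fin pos_part_ge0.
  rewrite -pt_calls sumEFin; congr (_%:E).
  by apply: eq_bigr => k _; rewrite /dm_pt_nat valK.
rewrite /dm_value sumEFin; congr (_%:E).
by apply: eq_bigr => k _; rewrite /dm_pt_nat valK.
Qed.

End DiscreteLaw.

Theorem mainTheorem4 (R : realType) (n : nat) (p K w : 'I_n -> R) (K0 : R) :
  (forall i, 0 <= p i) -> (forall i, 0 < K i) -> (forall i, 0 < w i) -> 0 < K0 ->
  [/\ pinf p K w K0 = (dual_inf p K w K0)%:E,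
      dual_inf p K w K0 = explicit_value p K w K0 &
      exists ms : nat -> dmeasure R n,
        (forall k, dm_feasible p K (ms k)) /\
        (fun k => (dm_value w K0 (ms k))%:E) @ \oo --> pinf p K w K0].
Proof.
move=> p_ge0 K_gt0 w_gt0 K0_gt0.
have [nu [nu_ge0 _ nu_le1 nu_le]] := optimal_axis_weights K K0 p_ge0 w_gt0.
have [ms [ms_feasible ms_cvg]] := axis_dmeasure_approx w p_ge0 K_gt0 K0_gt0 nu_ge0 nu_le1.
have pinf_ge : ((explicit_value p K w K0)%:E <= pinf p K w K0)%E.
  by apply/ereal_infP => v /(explicit_value_le_feasible K_gt0 w_gt0).
have pinf_le : (pinf p K w K0 <= (axis_value p K w K0 nu)%:E)%E.
  by apply: ereal_le_cvg ms_cvg _ => k; apply: ereal_inf_lbound; exact: dm_feasible_value.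
have nuE : axis_value p K w K0 nu = explicit_value p K w K0.
  by apply/le_anti; rewrite nu_le -lee_fin (le_trans pinf_ge pinf_le).
have pinfE : pinf p K w K0 = (explicit_value p K w K0)%:E.
  by apply/le_anti; rewrite pinf_ge andbT -nuE pinf_le.
have dualE := dual_inf_eq K K0 p_ge0 w_gt0.
split=> //; first by rewrite pinfE dualE.
exists ms; split=> //; rewrite pinfE -nuE.
by apply: cvg_EFin => //; exact: nearW.
Qed.
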